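(* For every integer $n\ge5$, the coefficient of the monomial $T_nT_{n-1}T_3$ in $R_{n+1}$ is $c^{(n+1)}_{n,n-1,3}=-(n-1)n(n+1)$.
   Context: Let $T_1,T_2,\dots$ be indeterminates, $T_\alpha=T_{\alpha_1}\cdots T_{\alpha_d}$. Define linear operators $L,H$ on monomials (constants sent to $0$): $L(T_{\alpha_1}\cdots T_{\alpha_r})=\sum_{1\le i<j\le r}T_{\alpha_1}\cdots T_{\alpha_i+1}\cdots T_{\alpha_j+1}\cdots T_{\alpha_r}$, $H(T_{\alpha_1}\cdots T_{\alpha_r})=-\frac12\sum_{k=1}^{r}\sum_{l=1}^{\alpha_k-1}\binom{\alpha_k}{l}T_{1+l}T_{1+\alpha_k-l}\prod_{i\ne k}T_{\alpha_i}$. For $n\ge2$ let $A_n=-\sum_{k=1}^{n-1}\binom{n}{k}T_{1+k}T_{1+n-k}T_n$; set $R_2=0$, $R_{n+1}=A_n+L(R_n)+H(R_n)$. $c^{(n)}_\alpha$ is the coefficient of the monomial $T_\alpha$ in $R_n$. *)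

From mathcomp Require Import all_boot all_order all_algebra.
Set Implicit Arguments. Unset Strict Implicit. Unset Printing Implicit Defensive.
Import Order.TTheory GRing.Theory Num.Theory.
Local Open Scope ring_scope.

(* A monomial T_{a_1}...T_{a_r} is represented by the list [:: a_1; ...; a_r]
   (order irrelevant; two lists denote the same monomial iff perm_eq).
   A polynomial over Q is a finite formal sum: a list of (coefficient, monomial). *)
Definition monom := seq nat.
Definition tpoly := seq (rat * monom).

Definition pscale (c : rat) (p : tpoly) : tpoly := [seq (c * t.1, t.2) | t <- p].

Definition linext (f : monom -> tpoly) (p : tpoly) : tpoly :=
  flatten [seq pscale t.1 (f t.2) | t <- p].

Definition incr2 (a : monom) (i j : nat) : monom :=
  [seq (if (k == i) || (k == j) then (nth 0%N a k).+1 else nth 0%N a k)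
  | k <- iota 0 (size a)].

Definition Lmono (a : monom) : tpoly :=
  [seq (1, incr2 a ij.1 ij.2)
  | ij <- [seq ij <- [seq (i, j) | i <- iota 0 (size a), j <- iota 0 (size a)]
          | (ij.1 < ij.2)%N]].

Definition dropk (a : monom) (k : nat) : monom := take k a ++ drop k.+1 a.

Definition Hmono (a : monom) : tpoly :=
  flatten [seq
     [seq (- (1 / 2%:R) * ('C(nth 0%N a k, l))%:R,
           (1 + l)%N :: (1 + nth 0%N a k - l)%N :: dropk a k)
     | l <- iota 1 (nth 0%N a k).-1]
   | k <- iota 0 (size a)].

Definition Lop := linext Lmono.
Definition Hop := linext Hmono.

Definition Apoly (n : nat) : tpoly :=
  [seq (- ('C(n, k))%:R, [:: (1 + k)%N; (1 + n - k)%N; n]) | k <- iota 1 n.-1].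

(* Rp m = R_{m+2}: R_2 = 0, R_{n+1} = A_n + L(R_n) + H(R_n) *)
Fixpoint Rp (m : nat) : tpoly :=
  match m with
  | 0%N => [::]
  | m'.+1 => let r := Rp m' in Apoly m'.+2 ++ Lop r ++ Hop r
  end.

Definition Rn (n : nat) : tpoly := Rp (n - 2).

Definition coefT (p : tpoly) (alpha : monom) : rat :=
  \sum_(t <- p | perm_eq t.2 alpha) t.1.

(** Only three-factor monomials matter: [A_n] and [L] preserve the number of factors, [H] raises
    it, and every monomial of [R_n] has at least three factors, all of index at most [n - 1]. So the
    coefficients of three-factor monomials obey a recursion driven by [A_n] and [L] alone. Undoing
    one step of [L] under the index bound shows that [T_3 T_(n-1) T_n] arises in [L(R_n)] from
    [T_2 T_(n-1)^2] in two ways and from [T_3 T_(n-2) T_(n-1)] in one way, while [T_2 T_n^2] arises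
    only from [T_2 T_(n-1)^2]. Adding the contributions of [A_n] gives
      c_(n+1)(2, n, n) = c_n(2, n-1, n-1) - 2 n,
      c_(n+1)(3, n-1, n) = c_n(3, n-2, n-1) + 2 c_n(2, n-1, n-1) - n (n - 1),
    whose solutions are [c_n(2, n-1, n-1) = -n (n-1)] and [c_(n+1)(3, n-1, n) = -(n-1) n (n+1)]. *)

From mathcomp Require Import all_boot all_order all_algebra.
From mathcomp Require Import zify.
Import GRing.Theory.
Local Open Scope ring_scope.

Lemma perm_cons_rem (T : eqType) (x : T) s t :
  perm_eq (x :: s) t = (x \in t) && perm_eq s (rem x t).
Proof.
apply/idP/andP=> [eq_xs_t | [t_x eq_s]].
  have t_x : x \in t by rewrite -(perm_mem eq_xs_t) mem_head.
  by split=> //; rewrite -(perm_cons x) (perm_trans _ (perm_to_rem t_x)) // perm_sym.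
by rewrite perm_sym (perm_trans (perm_to_rem t_x)) // perm_cons perm_sym.
Qed.

Lemma perm_nil_eq (T : eqType) (s : seq T) : perm_eq [::] s = nilp s.
Proof. by rewrite perm_sym; apply/perm_nilP/nilP. Qed.

Lemma big_seq_delta (R : pzSemiRingType) (I : eqType) (r : seq I) (F : I -> R) j :
  uniq r -> j \in r -> \sum_(i <- r) F i * (i == j)%:R = F j.
Proof.
move=> r_uniq r_j; rewrite (bigD1_seq j) //= eqxx mulr1 big1 ?addr0 // => i /negbTE->.
by rewrite mulr0.
Qed.

(* Decides [perm_eq] between short lists of naturals: after unfolding, every atom [u == v] is
   split on, and the cases contradicting the linear hypotheses are discarded. *)
Ltac perm_eq_cases :=
  rewrite !perm_cons_rem !perm_nil_eq !inE /=;
  repeat (match goal with |- context [?u == ?v] => case: (u =P v) => [?|?]; try subst end;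
          rewrite /= ?inE ?eqSS; try done; try (exfalso; lia)).

Lemma coefT_cat p q a : coefT (p ++ q) a = coefT p a + coefT q a.
Proof. by rewrite /coefT big_cat. Qed.

Lemma coefTE p a : coefT p a = \sum_(t <- p) t.1 * (perm_eq t.2 a)%:R.
Proof.
by rewrite /coefT big_mkcond; apply: eq_bigr => t _; case: ifP; rewrite ?mulr1 ?mulr0.
Qed.

Lemma coefT_linext f p a : coefT (linext f p) a = \sum_(t <- p) t.1 * coefT (f t.2) a.
Proof.
rewrite /coefT /linext big_flatten big_map; apply: eq_bigr => t _.
by rewrite /pscale big_map mulr_sumr.
Qed.

Lemma coefT_perm p a b : perm_eq a b -> coefT p a = coefT p b.
Proof. by move=> /permPr eq_ab; apply: eq_bigl => t; apply: eq_ab. Qed.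

Lemma coefT_size_eq0 p a : all (fun t => size t.2 != size a) p -> coefT p a = 0.
Proof.
move=> /allP sizes_p; rewrite /coefT big1_seq // => t /andP[eq_ta p_t].
by move: (sizes_p t p_t); rewrite (perm_size eq_ta) eqxx.
Qed.

Lemma all_linext (P : monom -> bool) f p :
  (forall t, t \in p -> all (fun u => P u.2) (f t.2)) -> all (fun u => P u.2) (linext f p).
Proof.
move=> Pf; apply/allP=> _ /flattenP[_ /mapP[t p_t ->] /mapP[u fu ->]] /=.
exact: (allP (Pf t p_t)).
Qed.

Lemma Lmono_size a : all (fun u => size u.2 == size a) (Lmono a).
Proof. by apply/allP=> _ /mapP[ij _ ->]; rewrite /= /incr2 size_map size_iota. Qed.

Lemma Lmono_bound B a :
  all (fun x => x <= B)%N a -> all (fun u => all (fun x => x <= B.+1)%N u.2) (Lmono a).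
Proof.
move=> /allP a_le; apply/allP=> _ /mapP[ij _ ->] /=; rewrite /incr2 all_map.
apply/allP=> k; rewrite mem_iota add0n => /andP[_ /(mem_nth 0%N)/a_le] /=.
by case: ifP => _; lia.
Qed.

Lemma Hmono_size a : all (fun u => size u.2 == (size a).+1) (Hmono a).
Proof.
apply/allP=> _ /flattenP[_ /mapP[k k_a ->] /mapP[l _ ->]].
move: k_a; rewrite mem_iota /= /dropk size_cat size_take size_drop => k_lt.
by rewrite k_lt; lia.
Qed.

Lemma Hmono_bound B a :
  all (fun x => x <= B)%N a -> all (fun u => all (fun x => x <= B)%N u.2) (Hmono a).
Proof.
move=> a_le; apply/allP=> _ /flattenP[_ /mapP[k k_a ->] /mapP[l l_ak ->]].
move: k_a l_ak; rewrite !mem_iota add0n => /andP[_ k_lt] /andP[l_ge l_lt] /=.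
have ak_le : (nth 0 a k <= B)%N := allP a_le _ (mem_nth 0%N k_lt).
apply/and3P; split; try lia.
rewrite /dropk all_cat; apply/andP; split; apply/allP=> x x_in; apply: (allP a_le).
  exact: mem_take x_in.
exact: mem_drop x_in.
Qed.

Lemma RpS m : Rp m.+1 = Apoly m.+2 ++ Lop (Rp m) ++ Hop (Rp m).
Proof. by []. Qed.

Lemma Rp_monomials m :
  all (fun t => (3 <= size t.2) && all (fun x => x <= m.+1) t.2)%N (Rp m).
Proof.
elim: m => [//|m IHm]; rewrite RpS !all_cat; apply/and3P; split.
- by rewrite /Apoly all_map; apply/allP=> k; rewrite mem_iota /= => /andP[]; lia.
- apply: (all_linext (fun u => (3 <= size u) && all (fun x => x <= m.+2) u)%N).
  move=> t /(allP IHm)/andP[size_t t_le]; apply/allP=> u Lu.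
  by rewrite (eqP (allP (Lmono_size _) u Lu)) size_t (allP (Lmono_bound _ _ t_le) u Lu).
- apply: (all_linext (fun u => (3 <= size u) && all (fun x => x <= m.+2) u)%N).
  move=> t /(allP IHm)/andP[size_t t_le]; apply/allP=> u Hu.
  have t_le' : all (fun x => x <= m.+2)%N t.2 by apply/allP=> x /(allP t_le); lia.
  by rewrite (eqP (allP (Hmono_size _) u Hu)) ltnW // (allP (Hmono_bound _ _ t_le') u Hu).
Qed.

Lemma coefT_Rp_succ m a : size a = 3%N ->
  coefT (Rp m.+1) a = coefT (Apoly m.+2) a + coefT (Lop (Rp m)) a.
Proof.
move=> size_a; rewrite RpS !coefT_cat [coefT (Hop _) a]coefT_linext big1_seq ?addr0 //.
move=> t /andP[_ /(allP (Rp_monomials m))/andP[size_t _]].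
rewrite coefT_size_eq0 ?mulr0 //; apply/allP=> u Hu.
by rewrite (eqP (allP (Hmono_size _) u Hu)) size_a eqSS gtn_eqF.
Qed.

Lemma coefT_Lmono3 x y z a : coefT (Lmono [:: x; y; z]) a =
  (perm_eq [:: x.+1; y.+1; z] a)%:R + (perm_eq [:: x.+1; y; z.+1] a)%:R
  + (perm_eq [:: x; y.+1; z.+1] a)%:R.
Proof. by rewrite coefTE /Lmono /= /incr2 /= !big_cons big_nil /= !mul1r addr0 addrA. Qed.

Lemma coefT_Lop_Rp m a (q : tpoly) :
  size a = 3%N -> all (fun s => size s.2 == 3%N) q ->
  (forall x y z, (x <= m.+1)%N -> (y <= m.+1)%N -> (z <= m.+1)%N ->
     coefT (Lmono [:: x; y; z]) a = \sum_(s <- q) s.1 * (perm_eq [:: x; y; z] s.2)%:R) ->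
  coefT (Lop (Rp m)) a = \sum_(s <- q) s.1 * coefT (Rp m) s.2.
Proof.
move=> size_a /allP size_q Lmono_xyz.
under [RHS]eq_bigr => s _ do rewrite coefTE mulr_sumr.
rewrite /Lop coefT_linext exchange_big /=; apply: eq_big_seq => t.
move=> /(allP (Rp_monomials m))/andP[size_t].
case: t size_t => c [|x [|y [|z [|w u]]]] //= _.
  move=> /and4P[x_le y_le z_le _]; rewrite Lmono_xyz // mulr_sumr.
  by apply: eq_bigr => s _; rewrite mulrCA.
move=> _; rewrite coefT_size_eq0 ?mulr0.
  rewrite big1_seq // => s /andP[_ /size_q/eqP size_s].
  have not_perm : ~~ perm_eq [:: x, y, z, w & u] s.2.
    by apply/negP=> /perm_size; rewrite size_s.
  by rewrite (negbTE not_perm) !mulr0.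
by apply/allP=> v Lv; rewrite (eqP (allP (Lmono_size _) v Lv)) size_a.
Qed.

Lemma coefT_Lmono3_T2TnTn x y z p : (2 <= p)%N ->
  (x <= p.+1)%N -> (y <= p.+1)%N -> (z <= p.+1)%N ->
  coefT (Lmono [:: x; y; z]) [:: 2; p.+2; p.+2]%N = (perm_eq [:: x; y; z] [:: 2; p.+1; p.+1]%N)%:R.
Proof.
move=> *; rewrite coefT_Lmono3 -!natrD; congr _%:R.
by perm_eq_cases.
Qed.

Lemma coefT_Lmono3_T3Tn1Tn x y z p : (4 <= p)%N ->
  (x <= p.+1)%N -> (y <= p.+1)%N -> (z <= p.+1)%N ->
  coefT (Lmono [:: x; y; z]) [:: 3; p.+1; p.+2]%N =
  2%:R * (perm_eq [:: x; y; z] [:: 2; p.+1; p.+1]%N)%:R + (perm_eq [:: x; y; z] [:: 3; p; p.+1]%N)%:R.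
Proof.
move=> *; rewrite coefT_Lmono3 -natrM -!natrD; congr _%:R.
by perm_eq_cases.
Qed.

Lemma coefT_ApolyE n a : coefT (Apoly n) a =
  - \sum_(k <- iota 1 n.-1) 'C(n, k)%:R * (perm_eq [:: 1 + k; 1 + n - k; n]%N a)%:R.
Proof. by rewrite coefTE /Apoly big_map -sumrN; apply: eq_bigr => k _; rewrite mulNr. Qed.

Lemma coefT_Apoly_T2TnTn p : (1 <= p)%N ->
  coefT (Apoly p.+2) [:: 2; p.+2; p.+2]%N = - (2 * p.+2)%N%:R.
Proof.
move=> p_ge1; rewrite coefT_ApolyE.
rewrite (eq_big_seq (fun k => 'C(p.+2, k)%:R * (k == 1)%N%:R + 'C(p.+2, k)%:R * (k == p.+1)%:R)).
  rewrite big_split !big_seq_delta ?iota_uniq ?mem_iota /= ?bin1 ?binSn; try lia.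
  by rewrite -natrD; congr (- _%:R); lia.
move=> k; rewrite mem_iota => /andP[k_ge k_lt]; rewrite -mulrDr -natrD; congr (_ * _%:R).
by perm_eq_cases.
Qed.

Lemma coefT_Apoly_T3Tn1Tn p : (3 <= p)%N ->
  coefT (Apoly p.+2) [:: 3; p.+1; p.+2]%N = - (p.+2 * p.+1)%N%:R.
Proof.
move=> p_ge3; rewrite coefT_ApolyE.
rewrite (eq_big_seq (fun k => 'C(p.+2, k)%:R * (k == 2)%N%:R + 'C(p.+2, k)%:R * (k == p)%:R)).
  rewrite big_split !big_seq_delta ?iota_uniq ?mem_iota /=; try lia.
  have -> : 'C(p.+2, p) = 'C(p.+2, 2) by rewrite -(bin_sub (_ : 2 <= p.+2)%N) ?subSS ?subn0.
  have two_bin2 : (2 * 'C(p.+2, 2) = p.+2 * p.+1)%N by rewrite -(mul_bin_diag p.+2 1) bin1.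
  by rewrite -natrD; congr (- _%:R); lia.
move=> k; rewrite mem_iota => /andP[k_ge k_lt]; rewrite -mulrDr -natrD; congr (_ * _%:R).
by perm_eq_cases.
Qed.

Lemma coefT_Rp_T2TnTn_rec p : (2 <= p)%N ->
  coefT (Rp p.+1) [:: 2; p.+2; p.+2]%N =
  - (2 * p.+2)%N%:R + coefT (Rp p) [:: 2; p.+1; p.+1]%N.
Proof.
move=> p_ge2; rewrite coefT_Rp_succ // coefT_Apoly_T2TnTn ?(ltnW p_ge2) //.
rewrite (@coefT_Lop_Rp _ _ [:: (1, [:: 2; p.+1; p.+1]%N)]) ?big_seq1 ?mul1r //.
by move=> x y z *; rewrite big_seq1 mul1r coefT_Lmono3_T2TnTn.
Qed.

Lemma coefT_Rp_T3Tn1Tn_rec p : (4 <= p)%N ->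
  coefT (Rp p.+1) [:: 3; p.+1; p.+2]%N =
  - (p.+2 * p.+1)%N%:R + (2%:R * coefT (Rp p) [:: 2; p.+1; p.+1]%N + coefT (Rp p) [:: 3; p; p.+1]%N).
Proof.
move=> p_ge4; rewrite coefT_Rp_succ // coefT_Apoly_T3Tn1Tn ?(ltnW p_ge4) //.
rewrite (@coefT_Lop_Rp _ _ [:: (2%:R, [:: 2; p.+1; p.+1]%N); (1, [:: 3; p; p.+1]%N)]) //.
  by rewrite big_cons big_seq1 mul1r.
by move=> x y z *; rewrite big_cons big_seq1 mul1r coefT_Lmono3_T3Tn1Tn.
Qed.

Lemma coefT_Rp_T2TnTn p : (2 <= p)%N ->
  coefT (Rp p) [:: 2; p.+1; p.+1]%N = - (p.+2 * p.+1)%N%:R.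
Proof.
elim: p => // p IHp; rewrite ltnS leq_eqVlt => /predU1P[<- | p_ge2].
  by rewrite /coefT unlock; apply/eqP; vm_compute.
by rewrite coefT_Rp_T2TnTn_rec // IHp // -opprD -natrD; congr (- _%:R); nia.
Qed.

Lemma coefT_Rp_T3Tn1Tn p : (4 <= p)%N ->
  coefT (Rp p) [:: 3; p; p.+1]%N = - (p * p.+1 * p.+2)%N%:R.
Proof.
elim: p => // p IHp; rewrite ltnS leq_eqVlt => /predU1P[<- | p_ge4].
  by rewrite /coefT unlock; apply/eqP; vm_compute.
rewrite coefT_Rp_T3Tn1Tn_rec // IHp // coefT_Rp_T2TnTn; last lia.
by rewrite mulrN -natrM -!opprD -!natrD; congr (- _%:R); nia.
Qed.

Theorem mainTheorem14 (n : nat) (hn : (5 <= n)%N) :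
  coefT (Rn n.+1) [:: n; n.-1; 3%N] = - ((n.-1 * n * n.+1)%N%:R : rat).
Proof.
case: n hn => // p p_ge4.
rewrite /Rn subSS subn1 /= (@coefT_perm _ _ [:: 3; p; p.+1]%N) ?coefT_Rp_T3Tn1Tn //.
by apply/permP=> P /=; lia.
Qed.
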